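(* Fix $\lambda_s>0,\lambda>0$, $\alpha\in(0,1)$ and a constant $c>0$. For each $n\ge3$ let $\tilde n(n)$ be an integer with $1\le\tilde n(n)\le n$ and $\tilde n(n)\le c\,n^\alpha$. Then there exist $C>0$ and $N$ such that for all $n\ge N$ and every choice of $\tilde n(n)$ distinct jammed links of the ring $R(n)$, the average age of the jammed ring satisfies $$\Delta^\ell\le\begin{cases}C\,n^{\alpha}, & \alpha\ge \tfrac12,\\ C\sqrt n, & \alpha<\tfrac12.\end{cases}$$
   Context: Version-age model. A gossip network on a finite node set $\mathcal N$ is specified by source rates $\lambda_{0j}>0$ ($j\in\mathcal N$) and gossip rates $\lambda_{ij}\ge 0$ for ordered pairs $i\neq j$ ($\lambda_{ij}$ is the rate at which node $i$ sends updates to node $j$); $\lambda_s>0$ is the source's update rate. For nonempty $S\subseteq\mathcal N$ let $N(S)=\{i\in\mathcal N\setminus S:\ \sum_{j\in S}\lambda_{ij}>0\}$, and define the version ages recursively by $$\Delta_S=\frac{\lambda_s+\sum_{i\in N(S)}\big(\sum_{j\in S}\lambda_{ij}\big)\Delta_{S\cup\{i\}}}{\sum_{j\in S}\lambda_{0j}+\sum_{i\in N(S)}\sum_{j\in S}\lambda_{ij}}$$ (well defined by downward induction on $|S|$); $\Delta_i=\Delta_{\{i\}}$. Ring $R(n)$: nodes $\{1,\dots,n\}$, $\lambda_{0j}=\lambda/n$, and for each of the $n$ ring links $\{i,i+1\}$ (indices mod $n$) $\lambda_{i,i+1}=\lambda_{i+1,i}=\lambda/2$; all other rates $0$. Jamming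 $\tilde n$ distinct ring links means setting both rates of each of these links to $0$. The average age of the jammed ring is $\Delta^\ell=\frac1n\sum_{i=1}^n\Delta_i$ computed in the jammed network. *)

From HB Require Import structures.
From mathcomp Require Import all_boot all_order all_algebra.
From mathcomp Require Import all_classical all_reals all_analysis.
Set Implicit Arguments. Unset Strict Implicit. Unset Printing Implicit Defensive.
Import Order.TTheory GRing.Theory Num.Theory.
Local Open Scope ring_scope.

(* A gossip network on the node set 'I_n:
   l0 j   = source rate lambda_{0j},
   lg i j = gossip rate lambda_{ij} (node i sends to node j),
   ls     = source update rate lambda_s. *)

Definition in_rate (R : realType) (n : nat) (lg : 'I_n -> 'I_n -> R)
  (S : {set 'I_n}) (i : 'I_n) : R := \sum_(j in S) lg i j.

Definition nbhd (R : realType) (n : nat) (lg : 'I_n -> 'I_n -> R)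
  (S : {set 'I_n}) : {set 'I_n} :=
  [set i | (i \notin S) && (0 < in_rate lg S i)].

(* The recursion for Delta_S, unrolled with a fuel parameter.  Since every
   recursive call strictly enlarges S, for nonempty S fuel >= n - #|S| + 1
   suffices and the value is then the (unique) value of the recursion;
   [version_age] uses fuel n, which suffices for every nonempty S. *)
Fixpoint vage_fuel (R : realType) (n : nat) (ls : R) (l0 : 'I_n -> R)
  (lg : 'I_n -> 'I_n -> R) (fuel : nat) (S : {set 'I_n}) : R :=
  match fuel with
  | 0%N => 0
  | k.+1 =>
      (ls + \sum_(i in nbhd lg S) in_rate lg S i * vage_fuel ls l0 lg k (i |: S))
      / (\sum_(j in S) l0 j + \sum_(i in nbhd lg S) in_rate lg S i)
  end.

Definition version_age (R : realType) (n : nat) (ls : R) (l0 : 'I_n -> R)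
  (lg : 'I_n -> 'I_n -> R) (S : {set 'I_n}) : R :=
  vage_fuel ls l0 lg n S.

(* Ring R(n) on nodes 'I_n (node k here is node k+1 of the paper).
   Link number i is {i, i+1 mod n}; J is the set of jammed links.
   lambda_{i,i+1} = lambda_{i+1,i} = lambda/2 for unjammed links, 0 otherwise. *)
Definition ring_source (R : realType) (n : nat) (lam : R) (j : 'I_n) : R :=
  lam / n%:R.

Definition ring_gossip (R : realType) (n : nat) (lam : R) (J : {set 'I_n})
  (i j : 'I_n) : R :=
  if ((j == ordS i) && (i \notin J)) || ((i == ordS j) && (j \notin J))
  then lam / 2 else 0.

Definition jammed_ring_avg_age (R : realType) (n : nat) (ls lam : R)
  (J : {set 'I_n}) : R :=
  n%:R^-1 * \sum_(i : 'I_n)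
     version_age ls (ring_source lam) (ring_gossip lam J) [set i].

(* Version ages satisfy a comparison principle: if h >= 0 and
     1 + sum_(i in N(S)) r_i(S) h(S + i)
       <= (sum_(j in S) lambda_0j + sum_(i in N(S)) r_i(S)) h(S)
   whenever the total rate at S is positive, where r_i(S) = sum_(j in S) lambda_ij,
   then Delta_S <= lambda_s h(S), by induction along the recursion.
   The jammed links cut the ring into arcs, one ending at each jammed link.  On an
   arc of L nodes put s = min(L, m) with m ~ sqrt n and t = |S :&: arc|.  The
   potential n/(lambda s) + 2(s - t)/lambda (n/lambda + 2s/lambda when t = 0) is a
   supersolution: for t = 0 or t >= s the source alone refreshes S fast enough, and
   otherwise an unjammed link of the arc crosses the boundary of S at rate lambda/2
   and lowers the potential by 2/lambda.  Hence a node on an arc of length L has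
   Delta_i <= (lambda_s/lambda)(n/L + 6m), and averaging over the nodes, each arc
   contributes at most lambda_s/lambda:
   Delta^l <= (lambda_s/lambda)(ntil + 6 sqrt n) = O(n^alpha + sqrt n). *)

From HB Require Import structures.
From mathcomp Require Import all_boot all_order all_algebra.
From mathcomp Require Import all_classical all_reals all_analysis.
From mathcomp Require Import lra zify ring.
Set Implicit Arguments. Unset Strict Implicit. Unset Printing Implicit Defensive.
Import Order.TTheory GRing.Theory Num.Theory.
Local Open Scope ring_scope.

Section Supersolution.
Variables (R : realType) (n : nat) (l0 : 'I_n -> R) (lg : 'I_n -> 'I_n -> R).
Hypotheses (l0_ge0 : forall j, 0 <= l0 j) (lg_ge0 : forall i j, 0 <= lg i j).

Lemma in_rate_ge0 (S : {set 'I_n}) i : 0 <= in_rate lg S i.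
Proof. exact: sumr_ge0. Qed.

Lemma le_in_rate (S : {set 'I_n}) i j : j \in S -> lg i j <= in_rate lg S i.
Proof. by move=> jS; rewrite /in_rate (bigD1 j) //= lerDl sumr_ge0. Qed.

Definition age_supersolution (h : {set 'I_n} -> R) := forall S : {set 'I_n},
  0 < \sum_(j in S) l0 j + \sum_(i in nbhd lg S) in_rate lg S i ->
  1 + \sum_(i in nbhd lg S) in_rate lg S i * h (i |: S) <=
  (\sum_(j in S) l0 j + \sum_(i in nbhd lg S) in_rate lg S i) * h S.

Lemma vage_fuel_le_supersolution (ls : R) h k S : 0 <= ls ->
  (forall S, 0 <= h S) -> age_supersolution h -> vage_fuel ls l0 lg k S <= ls * h S.
Proof.
move=> ls_ge0 h_ge0 h_super; elim: k S => [|k IHk] S /=; first exact: mulr_ge0.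
set D := (X in _ / X).
have D_ge0 : 0 <= D by rewrite addr_ge0 ?sumr_ge0 // => i _; exact: in_rate_ge0.
have [->|D_neq0] := eqVneq D 0; first by rewrite invr0 mulr0 mulr_ge0.
have D_gt0 : 0 < D by rewrite lt_def D_neq0.
rewrite ler_pdivrMr // -mulrA [h S * D]mulrC.
apply: le_trans (ler_wpM2l ls_ge0 (h_super S D_gt0)).
rewrite mulrDr mulr1 lerD2l mulr_sumr ler_sum // => i _.
by rewrite mulrCA ler_wpM2l ?in_rate_ge0.
Qed.

Lemma version_age_le_supersolution (ls : R) h S : 0 <= ls ->
  (forall S, 0 <= h S) -> age_supersolution h -> version_age ls l0 lg S <= ls * h S.
Proof. exact: vage_fuel_le_supersolution. Qed.

Section Criteria.
Variables (h : {set 'I_n} -> R) (S : {set 'I_n}).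
Hypothesis h_mono : forall i, h (i |: S) <= h S.

Lemma supersolution_slack :
  (\sum_(j in S) l0 j + \sum_(i in nbhd lg S) in_rate lg S i) * h S
    - \sum_(i in nbhd lg S) in_rate lg S i * h (i |: S) =
  (\sum_(j in S) l0 j) * h S
    + \sum_(i in nbhd lg S) in_rate lg S i * (h S - h (i |: S)).
Proof.
rewrite mulrDl -addrA; congr (_ + _).
by rewrite mulr_suml -sumrB; apply: eq_bigr => i _; rewrite mulrBr.
Qed.

Lemma slack_ge0 : 0 <= \sum_(i in nbhd lg S) in_rate lg S i * (h S - h (i |: S)).
Proof. by apply: sumr_ge0 => i _; rewrite mulr_ge0 ?in_rate_ge0 ?subr_ge0. Qed.

Lemma supersolution_by_source : 1 <= (\sum_(j in S) l0 j) * h S ->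
  1 + \sum_(i in nbhd lg S) in_rate lg S i * h (i |: S) <=
  (\sum_(j in S) l0 j + \sum_(i in nbhd lg S) in_rate lg S i) * h S.
Proof. by move=> src; have := supersolution_slack; have := slack_ge0; lra. Qed.

Lemma supersolution_by_link i : 0 <= h S -> i \in nbhd lg S ->
  1 <= in_rate lg S i * (h S - h (i |: S)) ->
  1 + \sum_(i in nbhd lg S) in_rate lg S i * h (i |: S) <=
  (\sum_(j in S) l0 j + \sum_(i in nbhd lg S) in_rate lg S i) * h S.
Proof.
move=> hS_ge0 iN link.
have src_ge0 : 0 <= (\sum_(j in S) l0 j) * h S by rewrite mulr_ge0 ?sumr_ge0.
have : in_rate lg S i * (h S - h (i |: S)) <=
       \sum_(k in nbhd lg S) in_rate lg S k * (h S - h (k |: S)).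
  rewrite (bigD1 i) //= lerDl; apply: sumr_ge0 => k _.
  by rewrite mulr_ge0 ?in_rate_ge0 ?subr_ge0.
by have := supersolution_slack; lra.
Qed.
End Criteria.
End Supersolution.

Lemma exists_switch (P : nat -> bool) e a b :
  (a < e)%N -> (b < e)%N -> P a -> ~~ P b -> exists2 k, (k.+1 < e)%N & P k != P k.+1.
Proof.
move=> ae be Pa Pb.
have [/existsP [k /andP[ke sw]]|no_switch] :=
  boolP [exists k : 'I_e, (k.+1 < e)%N && (P k != P k.+1)]; first by exists k.
have P_const k : (k < e)%N -> P k = P 0%N.
  elim: k => [//|k IHk] ke; rewrite -IHk ?(ltnW ke) //; apply/eqP.
  apply: contraNT no_switch => sw; apply/existsP; exists (Ordinal (ltnW ke)).
  by rewrite /= ke eq_sym sw.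
by move: Pb; rewrite (P_const b be) -(P_const a ae) Pa.
Qed.

Section PathSupersolution.
Variables (R : realType) (n : nat) (l0 : 'I_n -> R) (lg : 'I_n -> 'I_n -> R) (a b : R).
Hypotheses (a_gt0 : 0 < a) (b_gt0 : 0 < b).
Hypotheses (l0_const : forall j, l0 j = a) (lg_ge0 : forall i j, 0 <= lg i j).
Variables (f : nat -> 'I_n) (e s : nat).
Hypothesis path_link :
  forall k, (k.+1 < e)%N -> b <= lg (f k) (f k.+1) /\ b <= lg (f k.+1) (f k).
Let P := [set f k | k : 'I_e].
Hypotheses (s_gt0 : (0 < s)%N) (s_le_path : (s <= #|P|)%N).

Definition path_potential (t : nat) : R :=
  if t == 0%N then a^-1 + s%:R / b else (a * s%:R)^-1 + (s - t)%:R / b.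

Lemma path_potential_ge0 t : 0 <= path_potential t.
Proof.
by rewrite /path_potential; case: eqP => _;
  rewrite addr_ge0 ?divr_ge0 ?invr_ge0 ?mulr_ge0 ?(ltW a_gt0) ?(ltW b_gt0).
Qed.

Lemma path_potential_anti t t' : (t <= t')%N -> path_potential t' <= path_potential t.
Proof.
move=> le_tt'.
have ler_div_b m m' : (m <= m')%N -> m%:R / b <= m'%:R / b.
  by move=> le_mm'; rewrite ler_wpM2r ?invr_ge0 ?(ltW b_gt0) ?ler_nat.
rewrite /path_potential; case: (posnP t') => [t'0|t'_gt0].
  by move: le_tt'; rewrite t'0 leqn0 => /eqP ->.
case: ifP => _; last by rewrite lerD2l ler_div_b // leq_sub2l.
apply: lerD; last by rewrite ler_div_b // leq_subr.
by rewrite invfM ler_piMr ?invr_ge0 ?(ltW a_gt0) // invf_le1 ?ltr0n // ler1n.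
Qed.

Lemma path_potential_step t : (0 < t < s)%N ->
  path_potential t = path_potential t.+1 + b^-1.
Proof.
case/andP=> t_gt0 t_lt_s; rewrite /path_potential /= gtn_eqF //.
have -> : (s - t = (s - t.+1).+1)%N by rewrite subnS prednK // subn_gt0.
by rewrite -addrA -addn1 natrD mulrDl mul1r.
Qed.

Let h (S : {set 'I_n}) := path_potential #|S :&: P|.

Let l0_ge0 j : 0 <= l0 j. Proof. by rewrite l0_const ltW. Qed.

Lemma card_setU1I_path v (S : {set 'I_n}) : v \in P -> v \notin S ->
  #|(v |: S) :&: P| = #|S :&: P|.+1.
Proof.
move=> vP vS; rewrite finset.setIUl (finset.setIidPl _) ?finset.sub1set //.
by rewrite finset.cardsU1 finset.inE (negbTE vS).
Qed.

Lemma path_boundary (S : {set 'I_n}) : (0 < #|S :&: P| < #|P|)%N ->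
  exists v u, [/\ v \in P, v \notin S, u \in S & b <= lg v u].
Proof.
case/andP=> SP_gt0 SP_lt_P.
have /finset.set0Pn [x /finset.setIP [xS /imsetP [kx _ xE]]] : S :&: P != finset.set0.
  by rewrite -card_gt0.
have [y /imsetP [ky _ yE] yS] : exists2 y, y \in P & y \notin S.
  apply/exists_inP; apply: contraTT SP_lt_P => /exists_inPn P_sub_S.
  rewrite -leqNgt subset_leq_card //; apply/fintype.subsetP => z zP.
  by rewrite finset.inE zP andbT; apply/negPn/P_sub_S.
rewrite xE in xS; rewrite yE in yS.
have [k ke] := exists_switch (P := fun k => f k \in S) (ltn_ord kx) (ltn_ord ky) xS yS.
have [lk lk'] := path_link ke.
have fkP : f k \in P by apply/imsetP; exists (Ordinal (ltnW ke)).
have fk'P : f k.+1 \in P by apply/imsetP; exists (Ordinal ke).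
by case: (f k \in S) / boolP; case: (f k.+1 \in S) / boolP => // fk'S fkS _;
  [exists (f k.+1), (f k) | exists (f k), (f k.+1)].
Qed.

Lemma path_potential_supersolution : age_supersolution l0 lg h.
Proof.
move=> S D_gt0.
have S_gt0 : (0 < #|S|)%N.
  rewrite card_gt0; apply: contraTneq D_gt0 => ->.
  by rewrite big_set0 add0r big1 ?ltxx // => i _; rewrite /in_rate big_set0.
have src : \sum_(j in S) l0 j = #|S|%:R * a.
  by rewrite (eq_bigr _ (fun j _ => l0_const j)) sumr_const mulr_natl.
have h_mono v : h (v |: S) <= h S.
  by apply/path_potential_anti/subset_leq_card/finset.setSI/finset.subsetUr.
have t_le_S : (#|S :&: P| <= #|S|)%N by apply/subset_leq_card/finset.subsetIl.
rewrite /h; case: (posnP #|S :&: P|) => [t0|t_gt0].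
  apply: (supersolution_by_source lg_ge0 h_mono).
  rewrite src /h t0 /path_potential /=.
  rewrite -mulrA mulrDr mulfV ?gt_eqF //.
  have S_ge1 : 1 <= #|S|%:R :> R by rewrite ler1n.
  have : 0 <= a * (s%:R / b) by rewrite mulr_ge0 ?divr_ge0 ?(ltW a_gt0) ?(ltW b_gt0).
  nra.
case: (leqP s #|S :&: P|) => [s_le_t|t_lt_s].
  apply: (supersolution_by_source lg_ge0 h_mono).
  rewrite src /h /path_potential gtn_eqF //.
  rewrite -mulrA mulrDr invfM mulrA mulfV ?gt_eqF // mul1r.
  apply: (@le_trans _ _ (#|S|%:R / s%:R)).
    by rewrite ler_pdivlMr ?ltr0n // mul1r ler_nat (leq_trans s_le_t).
  rewrite ler_wpM2l // lerDl mulr_ge0 ?divr_ge0 ?(ltW a_gt0) ?(ltW b_gt0) //.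
have SP : (0 < #|S :&: P| < #|P|)%N by rewrite t_gt0 (leq_trans t_lt_s).
have [v [u [vP vS uS b_le_lg]]] := path_boundary SP.
have b_le_rate : b <= in_rate lg S v by apply: le_trans b_le_lg (le_in_rate _ _ uS).
apply: (supersolution_by_link l0_ge0 lg_ge0 h_mono (i := v)).
- exact: path_potential_ge0.
- by rewrite finset.inE vS (lt_le_trans b_gt0).
rewrite /h card_setU1I_path // (path_potential_step (t := #|S :&: P|)) ?t_gt0 //.
by rewrite addrAC subrr add0r ler_pdivlMr // mul1r.
Qed.

Lemma path_version_age_le (ls : R) i : 0 <= ls -> i \in P ->
  version_age ls l0 lg [set i] <= ls * ((a * s%:R)^-1 + (s - 1)%:R / b).
Proof.
move=> ls_ge0 iP.
have -> : (a * s%:R)^-1 + (s - 1)%:R / b = h [set i].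
  by rewrite /h (finset.setIidPl _) ?finset.sub1set // finset.cards1.
apply: (version_age_le_supersolution l0_ge0 lg_ge0) => //.
- by move=> S; exact: path_potential_ge0.
- exact: path_potential_supersolution.
Qed.

End PathSupersolution.

Section RingOrbit.
Variable n : nat.
Local Open Scope nat_scope.

Lemma val_iter_ordS d (i : 'I_n) : val (iter d (@ordS n) i) = (i + d) %% n.
Proof.
elim: d => [|d IHd] /=; first by rewrite addn0 modn_small.
by rewrite IHd -addn1 modnDml -addnA addn1 addnS.
Qed.

Lemma iter_ord_pred_ordS k (i : 'I_n) :
  iter k (@ord_pred n) (ordS i) = ordS (iter k (@ord_pred n) i).
Proof. by elim: k => [|k IHk] //=; rewrite IHk ordSK ord_predK. Qed.

Lemma iter_ord_pred_ordSD k d (i : 'I_n) :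
  iter k (@ord_pred n) (iter (k + d) (@ordS n) i) = iter d (@ordS n) i.
Proof. by elim: k => [|k IHk] //=; rewrite iter_ord_pred_ordS ordSK IHk. Qed.

Lemma iter_ordS_onto (i x : 'I_n) : exists2 k, 0 < k & iter k (@ordS n) i = x.
Proof.
have n_gt0 : 0 < n by case: n x => [[]|].
exists (x + n - i + n); first lia.
apply: val_inj; rewrite val_iter_ordS.
have -> : i + (x + n - i + n) = 2 * n + x by have := ltn_ord i; lia.
by rewrite modnMDl modn_small.
Qed.

End RingOrbit.

Section RingArcs.
Variables (n : nat) (J : {set 'I_n}) (j0 : 'I_n).
Hypothesis j0J : j0 \in J.
Local Open Scope nat_scope.

Lemma exists_jam_ahead i : exists d, iter d (@ordS n) i \in J.
Proof. by have [k _ ik] := iter_ordS_onto i j0; exists k; rewrite ik. Qed.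

Definition jam_dist i := ex_minn (exists_jam_ahead i).
Definition next_jam i := iter (jam_dist i) (@ordS n) i.

Lemma next_jam_in i : next_jam i \in J.
Proof. by rewrite /next_jam /jam_dist; case: ex_minnP. Qed.

Lemma jam_dist_min i d : iter d (@ordS n) i \in J -> jam_dist i <= d.
Proof. by rewrite /jam_dist; case: ex_minnP => m _ m_min /m_min. Qed.

Lemma exists_jam_behind j : exists e, (0 < e) && (iter e (@ord_pred n) j \in J).
Proof.
have [k k_gt0 j0k] := iter_ordS_onto j0 j; exists k; rewrite k_gt0 -j0k.
by have := iter_ord_pred_ordSD k 0 j0; rewrite addn0 => ->.
Qed.

Definition arc_len j := ex_minn (exists_jam_behind j).

Lemma arc_lenP j : 0 < arc_len j /\ iter (arc_len j) (@ord_pred n) j \in J.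
Proof. by rewrite /arc_len; case: ex_minnP => e /andP[]. Qed.

Lemma arc_len_min j e : 0 < e -> iter e (@ord_pred n) j \in J -> arc_len j <= e.
Proof.
by rewrite /arc_len; case: ex_minnP => m _ m_min e_gt0 je; rewrite m_min ?e_gt0.
Qed.

Lemma arc_link_notin j k : 0 < k < arc_len j -> iter k (@ord_pred n) j \notin J.
Proof.
case/andP=> k_gt0 k_lt; apply: contraTN k_lt => /(arc_len_min k_gt0).
by rewrite -leqNgt.
Qed.

(* The nodes j, j - 1, ... down to the previous jammed link; consecutive
   ones are joined by unjammed links. *)
Definition arc j := [set iter k (@ord_pred n) j | k : 'I_(arc_len j)].

Lemma mem_arc_next_jam i : i \in arc (next_jam i).
Proof.
have lt_dist_len : jam_dist i < arc_len (next_jam i).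
  set d := jam_dist i; set e := arc_len _; rewrite ltnNge; apply/negP => e_le_d.
  have [e_gt0 jam_e] := arc_lenP (next_jam i).
  have jam_de : iter (d - e) (@ordS n) i \in J.
    by rewrite -(iter_ord_pred_ordSD e) subnKC.
  by have := jam_dist_min jam_de; lia.
apply/imsetP; exists (Ordinal lt_dist_len) => //=.
by have := iter_ord_pred_ordSD (jam_dist i) 0 i; rewrite addn0 /next_jam => ->.
Qed.

Lemma card_arc_gt0 j : 0 < #|arc j|.
Proof.
rewrite card_gt0; apply/finset.set0Pn; exists j.
by apply/imsetP; exists (Ordinal (proj1 (arc_lenP j))).
Qed.

Local Open Scope ring_scope.

Lemma sum_inv_card_arc (R : realFieldType) :
  \sum_(i < n) (#|arc (next_jam i)|%:R : R)^-1 <= #|J|%:R.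
Proof.
rewrite (partition_big next_jam (mem J)) /=; last by move=> i _; exact: next_jam_in.
rewrite -sumr_const ler_sum // => j _.
apply: (@le_trans _ _ (\sum_(i in arc j) (#|arc j|%:R : R)^-1)).
  rewrite [X in _ <= X]big_mkcond [X in X <= _]big_mkcond ler_sum // => i _.
  by case: eqP => [<-|_]; rewrite ?mem_arc_next_jam //; case: ifP.
by rewrite sumr_const -[X in X <= _]mulr_natr mulVf // pnatr_eq0 -lt0n card_arc_gt0.
Qed.

End RingArcs.

Lemma ler_div_minn_add (R : realFieldType) (n L m : nat) :
  (0 < L)%N -> (0 < m)%N -> (n <= 4 * m * m)%N ->
  n%:R / (minn L m)%:R + 2 * (minn L m - 1)%:R <= n%:R / L%:R + 6 * m%:R :> R.
Proof.
move=> L_gt0 m_gt0 n_le.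
have n_div_m : n%:R / m%:R <= 4 * m%:R :> R.
  by rewrite ler_pdivrMr ?ltr0n // -!natrM ler_nat.
have n_div_L : 0 <= n%:R / L%:R :> R by rewrite divr_ge0.
have m_ge0 : 0 <= m%:R :> R by [].
have min_le_m : (minn L m - 1)%:R <= m%:R :> R.
  by rewrite ler_nat (leq_trans (leq_subr _ _) (geq_minr _ _)).
by case: (leqP L m) => [/minn_idPl|/ltnW/minn_idPr] min_eq;
  rewrite min_eq in min_le_m *; lra.
Qed.

Section RingAge.
Variables (R : realType) (n : nat) (lam ls : R) (J : {set 'I_n}) (j0 : 'I_n).
Hypotheses (lam_gt0 : 0 < lam) (ls_ge0 : 0 <= ls) (j0J : j0 \in J).

Lemma ring_gossip_ge0 i j : 0 <= ring_gossip lam J i j.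
Proof. by rewrite /ring_gossip; case: ifP => _; rewrite ?divr_ge0 ?(ltW lam_gt0). Qed.

Lemma ring_gossip_link i : i \notin J ->
  ring_gossip lam J i (ordS i) = lam / 2 /\ ring_gossip lam J (ordS i) i = lam / 2.
Proof. by move=> iJ; rewrite /ring_gossip !eqxx iJ orbT. Qed.

Lemma ring_version_age_le (m : nat) i : (0 < m)%N -> (n <= 4 * m * m)%N ->
  version_age ls (ring_source lam) (ring_gossip lam J) [set i] <=
  ls / lam * (n%:R / #|arc j0J (next_jam j0J i)|%:R + 6 * m%:R).
Proof.
move=> m_gt0 n_le.
have n_gt0 : (0 < n)%N by apply: leq_ltn_trans (ltn_ord i).
set j := next_jam j0J i; set L := #|arc j0J j|; set s := minn L m.
have L_gt0 : (0 < L)%N := card_arc_gt0 j0J j.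
have arc_link k : (k.+1 < arc_len j0J j)%N ->
    lam / 2 <= ring_gossip lam J (iter k (@ord_pred n) j) (iter k.+1 (@ord_pred n) j) /\
    lam / 2 <= ring_gossip lam J (iter k.+1 (@ord_pred n) j) (iter k (@ord_pred n) j).
  move=> k_lt; have -> : iter k (@ord_pred n) j = ordS (iter k.+1 (@ord_pred n) j).
    by rewrite /= ord_predK.
  by have [-> ->] := ring_gossip_link (arc_link_notin (k := k.+1) k_lt).
have a_gt0 : 0 < lam / n%:R by rewrite divr_gt0 ?ltr0n.
have b_gt0 : 0 < lam / 2 by rewrite divr_gt0.
have s_gt0 : (0 < s)%N by rewrite leq_min L_gt0 m_gt0.
apply: le_trans (path_version_age_le (l0 := ring_source lam) a_gt0 b_gt0
  (fun _ => erefl) ring_gossip_ge0 arc_link s_gt0 (geq_minl L m) ls_ge0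
  (mem_arc_next_jam j0J i)) _.
have -> : (lam / n%:R * s%:R)^-1 + (s - 1)%:R / (lam / 2) =
    lam^-1 * (n%:R / s%:R + 2 * (s - 1)%:R).
  by field; rewrite !pnatr_eq0 -!lt0n s_gt0 n_gt0 gt_eqF.
rewrite -mulrA ler_wpM2l // ler_wpM2l ?invr_ge0 ?(ltW lam_gt0) //.
exact: ler_div_minn_add.
Qed.

Lemma jammed_ring_avg_age_le_arcs (m : nat) : (0 < m)%N -> (n <= 4 * m * m)%N ->
  jammed_ring_avg_age ls lam J <= ls / lam * (#|J|%:R + 6 * m%:R).
Proof.
move=> m_gt0 n_le; rewrite /jammed_ring_avg_age.
have n_neq0 : n%:R != 0 :> R by rewrite pnatr_eq0 -lt0n (leq_ltn_trans _ (ltn_ord j0)).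
apply: (@le_trans _ _ (n%:R^-1 *
    \sum_(i < n) ls / lam * (n%:R / #|arc j0J (next_jam j0J i)|%:R + 6 * m%:R))).
  by rewrite ler_wpM2l ?invr_ge0 // ler_sum // => i _; exact: ring_version_age_le.
rewrite -mulr_sumr mulrCA ler_wpM2l ?divr_ge0 ?(ltW lam_gt0) //.
rewrite big_split /= -mulr_sumr sumr_const card_ord mulrDr mulrA mulVf // mul1r.
rewrite -[6 * m%:R *+ n]mulr_natr mulrCA mulVf // mulr1 lerD2r.
exact: sum_inv_card_arc.
Qed.

End RingAge.

Lemma exists_nat_sqrt n : exists m, (m * m <= n < m.+1 * m.+1)%N.
Proof.
elim: n => [|n [m /andP[m_sq n_lt]]]; first by exists 0%N.
by case: (ltnP n.+1 (m.+1 * m.+1)) => n_cmp;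
  [exists m | exists m.+1]; apply/andP; split; nia.
Qed.

Lemma jammed_ring_avg_age_le (R : realType) n (ls lam : R) (J : {set 'I_n}) :
  0 < lam -> 0 <= ls -> J != finset.set0 ->
  jammed_ring_avg_age ls lam J <= ls / lam * (#|J|%:R + 6 * Num.sqrt n%:R).
Proof.
move=> lam_gt0 ls_ge0 /finset.set0Pn [j0 j0J].
have n_gt0 : (0 < n)%N by apply: leq_ltn_trans (ltn_ord j0).
have [m /andP[m_sq n_lt]] := exists_nat_sqrt n.
have m_gt0 : (0 < m)%N by case: m m_sq n_lt => //; lia.
apply: le_trans (jammed_ring_avg_age_le_arcs lam_gt0 ls_ge0 j0J m_gt0 _) _; first by nia.
rewrite ler_wpM2l ?divr_ge0 ?(ltW lam_gt0) // lerD2l ler_wpM2l //.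
by rewrite -[m%:R]ger0_norm // -sqrtr_sqr ler_wsqrtr // expr2 -natrM ler_nat m_sq.
Qed.

Lemma powR_sqrt_le_if (R : realType) (x a : R) : 1 <= x -> 0 <= a ->
  let M := if 2^-1 <= a then x `^ a else Num.sqrt x in x `^ a <= M /\ Num.sqrt x <= M.
Proof.
move=> x_ge1 a_ge0 /=; rewrite -powR12_sqrt ?(le_trans ler01 x_ge1) //.
by case: ifP => a_cmp; split => //; apply: ler_powR => //; rewrite ltW // ltNge a_cmp.
Qed.

Theorem theorem4 (R : realType) (ls lam alpha c : R) (ntil : nat -> nat) :
  0 < ls -> 0 < lam -> 0 < alpha < 1 -> 0 < c ->
  (forall n : nat, (3 <= n)%N ->
     (1 <= ntil n <= n)%N /\ (ntil n)%:R <= c * (n%:R `^ alpha)) ->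
  exists C : R, 0 < C /\
  exists N : nat, forall n : nat, (N <= n)%N ->
    forall J : {set 'I_n}, #|J| = ntil n ->
      jammed_ring_avg_age ls lam J <=
        (if 2^-1 <= alpha then C * (n%:R `^ alpha) else C * Num.sqrt (n%:R)).
Proof.
move=> ls_gt0 lam_gt0 /andP[alpha_gt0 _] c_gt0 ntil_bounds.
have ls_lam_gt0 : 0 < ls / lam by rewrite divr_gt0.
exists (ls / lam * (c + 6)); split; first by rewrite mulr_gt0 //; lra.
exists 3%N => n n_ge3 J card_J.
have [/andP[ntil_gt0 _] ntil_le] := ntil_bounds n n_ge3.
have J_neq0 : J != finset.set0 by rewrite -card_gt0 card_J.
have n_ge1 : 1 <= n%:R :> R by rewrite ler1n (leq_trans _ n_ge3).
have [pow_le sqrt_le] := powR_sqrt_le_if n_ge1 (ltW alpha_gt0).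
set M := (if _ then _ else _) in pow_le sqrt_le.
have -> : (if 2^-1 <= alpha then ls / lam * (c + 6) * n%:R `^ alpha
           else ls / lam * (c + 6) * Num.sqrt n%:R) = ls / lam * ((c + 6) * M).
  by rewrite /M; case: ifP; rewrite mulrA.
apply: le_trans (jammed_ring_avg_age_le lam_gt0 (ltW ls_gt0) J_neq0) _.
rewrite ler_wpM2l ?(ltW ls_lam_gt0) // card_J.
have : c * n%:R `^ alpha <= c * M by rewrite ler_wpM2l ?(ltW c_gt0).
lra.
Qed.
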